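(* The momentum map $F=(L,H)$ of the $b$-coupled spin-oscillator restricted to either open half $M^+=\{z>0\}\times\mathbb R^2$ or $M^-=\{z<0\}\times\mathbb R^2$ is surjective onto $\mathbb R^2$.
   Context: Fix constants $\rho_1,\rho_2>0$. Let $S^2\subset\mathbb R^3$ be the unit sphere with coordinates $(x,y,z)$, $x^2+y^2+z^2=1$, and $(u,v)$ coordinates on $\mathbb R^2$; $M=S^2\times\mathbb R^2$. The $b$-coupled spin-oscillator momentum map is $F=(L,H)$ with $L=\rho_1\log|z|+\frac{\rho_2}{2}(u^2+v^2)$ and $H=\frac12(xu+yv)$; on $M^{\pm}$ it is a smooth integrable system for the symplectic form $-\rho_1\frac{1}{1-x^2-y^2}dx\wedge dy+\rho_2\,du\wedge dv$ (in coordinates $(x,y,u,v)$). *)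

From Stdlib Require Import Reals.
Open Scope R_scope.

(* A point of M = S^2 x R^2, with coordinates (x,y,z) on S^2 and (u,v) on R^2. *)
Record point := mkPt { px : R; py : R; pz : R; pu : R; pv : R }.

Definition in_M (p : point) : Prop :=
  (px p)^2 + (py p)^2 + (pz p)^2 = 1.

Definition in_Mplus (p : point) : Prop := in_M p /\ 0 < pz p.
Definition in_Mminus (p : point) : Prop := in_M p /\ pz p < 0.

Definition momL (rho1 rho2 : R) (p : point) : R :=
  rho1 * ln (Rabs (pz p)) + rho2 / 2 * ((pu p)^2 + (pv p)^2).
Definition momH (p : point) : R :=
  / 2 * (px p * pu p + py p * pv p).

From Stdlib Require Import Reals Lra.
Open Scope R_scope.

(* The reflection z |-> -z exchanges M^+ and M^- and preserves both L (which
   only sees |z|) and H (which does not see z), so it suffices to treat M^+.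
   There we work on the slice y = 0.  At a height 0 < z < 1 the spin part is
   (x, 0, z) with x = sqrt (1 - z^2) > 0; taking u = 2h/x gives H = h, and
   the oscillator energy u^2 + v^2 can then be any value c >= u^2, through
   v = sqrt (c - u^2).  On such a point L = rho1 ln z + rho2/2 c, so to reach
   a prescribed value l we pick z small enough (ln z very negative, using
   rho1 > 0) that the required energy c = 2 (l - rho1 ln z) / rho2 exceeds the
   lower bound 4h^2 / (1 - z^2) (using rho2 > 0). *)

Definition flip (p : point) : point :=
  mkPt (px p) (py p) (- pz p) (pu p) (pv p).

Lemma flip_Mplus (p : point) : in_Mplus p -> in_Mminus (flip p).
Proof.
  unfold in_Mplus, in_Mminus, in_M, flip; cbn [px py pz]; intros [Hs Hz].
  split; [rewrite <- Hs; ring | lra].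
Qed.

Lemma momL_flip (rho1 rho2 : R) (p : point) :
  momL rho1 rho2 (flip p) = momL rho1 rho2 p.
Proof. unfold momL, flip; cbn [pz pu pv]; now rewrite Rabs_Ropp. Qed.

Lemma momH_flip (p : point) : momH (flip p) = momH p.
Proof. reflexivity. Qed.

Lemma Mplus_fiber_point (z h c : R) :
  0 < z < 1 -> 4 * h ^ 2 <= c * (1 - z ^ 2) ->
  exists p : point, in_Mplus p /\ pz p = z /\
    (pu p) ^ 2 + (pv p) ^ 2 = c /\ momH p = h.
Proof.
  intros Hz Hc.
  assert (Hr : 0 < 1 - z ^ 2) by nra.
  set (x := sqrt (1 - z ^ 2)).
  assert (Hx : 0 < x) by (apply sqrt_lt_R0; lra).
  assert (Hx2 : x ^ 2 = 1 - z ^ 2)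
    by (unfold x; rewrite <- Rsqr_pow2; apply Rsqr_sqrt; lra).
  set (u := 2 * h / x).
  assert (Hu2 : u ^ 2 * (1 - z ^ 2) = 4 * h ^ 2)
    by (unfold u; rewrite <- Hx2; field; lra).
  assert (Hgap : 0 <= c - u ^ 2).
  { apply (Rmult_le_reg_r (1 - z ^ 2)); [exact Hr | nra]. }
  set (v := sqrt (c - u ^ 2)).
  assert (Hv2 : v ^ 2 = c - u ^ 2)
    by (unfold v; rewrite <- Rsqr_pow2; apply Rsqr_sqrt; exact Hgap).
  exists (mkPt x 0 z u v); unfold in_Mplus, in_M, momH; cbn [px py pz pu pv].
  repeat split; try lra.
  unfold u; field; lra.
Qed.

Lemma small_height (B : R) : exists z, 0 < z <= / 2 /\ ln z <= B.
Proof.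
  set (t := Rmin (ln (/ 2)) B).
  exists (exp t); split; [split|].
  - apply exp_pos.
  - apply Rnot_lt_le; intro Hbig.
    rewrite <- (exp_ln (/ 2)) in Hbig by lra.
    apply exp_lt_inv in Hbig.
    pose proof (Rmin_l (ln (/ 2)) B); unfold t in Hbig; lra.
  - rewrite ln_exp; apply Rmin_r.
Qed.

Lemma Mplus_surjective (rho1 rho2 : R) (hrho1 : 0 < rho1) (hrho2 : 0 < rho2)
    (l h : R) :
  exists p : point, in_Mplus p /\ momL rho1 rho2 p = l /\ momH p = h.
Proof.
  destruct (small_height ((l - 3 * rho2 * h ^ 2) / rho1)) as (z & Hz & Hln).
  set (c := 2 * (l - rho1 * ln z) / rho2).
  assert (Hc : 6 * h ^ 2 <= c).
  { unfold c; apply (Rmult_le_reg_r rho2); [exact hrho2|].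
    apply (Rmult_le_compat_l rho1) in Hln; [|lra].
    replace (rho1 * ((l - 3 * rho2 * h ^ 2) / rho1))
      with (l - 3 * rho2 * h ^ 2) in Hln by (field; lra).
    replace (2 * (l - rho1 * ln z) / rho2 * rho2)
      with (2 * (l - rho1 * ln z)) by (field; lra).
    lra. }
  assert (Henergy : 4 * h ^ 2 <= c * (1 - z ^ 2)).
  { assert (Hz2 : 3 / 4 <= 1 - z ^ 2) by nra.
    assert (0 <= h ^ 2) by apply pow2_ge_0.
    apply Rle_trans with (c * (3 / 4)); [lra | apply Rmult_le_compat_l; lra]. }
  destruct (Mplus_fiber_point z h c ltac:(lra) Henergy)
    as (p & Hp & Hpz & Hpc & Hph).
  exists p; split; [exact Hp | split; [|exact Hph]].
  unfold momL; rewrite Hpz, Hpc, Rabs_right by lra.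
  unfold c; field; lra.
Qed.

Theorem corollary4p7 (rho1 rho2 : R) (hrho1 : 0 < rho1) (hrho2 : 0 < rho2) :
  (forall l h : R, exists p : point,
      in_Mplus p /\ momL rho1 rho2 p = l /\ momH p = h) /\
  (forall l h : R, exists p : point,
      in_Mminus p /\ momL rho1 rho2 p = l /\ momH p = h).
Proof.
  split; intros l h.
  - exact (Mplus_surjective rho1 rho2 hrho1 hrho2 l h).
  - destruct (Mplus_surjective rho1 rho2 hrho1 hrho2 l h)
      as (p & Hp & HL & HH).
    exists (flip p).
    rewrite momL_flip, momH_flip.
    auto using flip_Mplus.
Qed.
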